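(* There is an absolute constant $C>0$ such that for every finite field $\mathbb{F}_q$ with $q$ elements and every Nikodym set $B\subset\mathbb{F}_q^2$ (i.e. for every $x\in\mathbb{F}_q^2\setminus B$ there exists a line $L\subset\mathbb{F}_q^2$ with $L\cap(\mathbb{F}_q^2\setminus B)=\{x\}$), one has \[|B|\ge \frac{2q^2}{3}-Cq.\] (That is, $|B|\ge \frac{2q^2}{3}+O(q)$ as $q\to\infty$.)
   Context: A line in $\mathbb{F}_q^2$ is a set of the form $\{a+tb: t\in\mathbb{F}_q\}$ with $a,b\in\mathbb{F}_q^2$, $b\neq 0$. *)

From mathcomp Require Import all_boot all_algebra.
From mathcomp Require Import finfield.
Set Implicit Arguments. Unset Strict Implicit. Unset Printing Implicit Defensive.
Import GRing.Theory.
Local Open Scope ring_scope.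

Definition line (F : finFieldType) (a b : F * F) : {set F * F} :=
  [set (a.1 + t * b.1, a.2 + t * b.2) | t : F].

Definition nikodym (F : finFieldType) (B : {set F * F}) : Prop :=
  forall x : F * F, x \notin B ->
    exists a b : F * F, b != (0, 0) /\ line a b :&: ~: B = [set x].

From mathcomp Require Import all_boot all_algebra finfield.
From mathcomp Require Import ring zify.
Set Implicit Arguments. Unset Strict Implicit. Unset Printing Implicit Defensive.
Import GRing.Theory.

(** For each point x outside a Nikodym set B fix a line L_x with
    L_x \ B = {x}; it has q - 1 points in B, and distinct such lines meet in
    at most one point. Double counting the incidences between these s lines
    and B, Cauchy-Schwarz gives (s (q-1))^2 <= |B| (s (q-1) + s^2), which with
    |B| + s = q^2 simplifies to s (s - q) <= q^2 (q - 1). Hence s is at most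
    about q^(3/2), in particular s <= q^2/3 + 2q. *)

Section Lines.
Variable F : finFieldType.
Local Open Scope ring_scope.

Lemma card_line (a b : F * F) : b != (0, 0) -> #|line a b| = #|F|.
Proof.
move=> b_neq0; rewrite card_imset // => t t' /= [] e1 e2.
have [b1_eq0|b1_neq0] := eqVneq b.1 0; last exact/(mulIf b1_neq0)/(addrI a.1).
have b2_neq0 : b.2 != 0.
  by apply: contra b_neq0 => /eqP b2_eq0; rewrite [b]surjective_pairing b1_eq0 b2_eq0.
exact/(mulIf b2_neq0)/(addrI a.2).
Qed.

Lemma line_through2 (a b p p' : F * F) : p != p' ->
  p \in line a b -> p' \in line a b -> line a b = line p (p'.1 - p.1, p'.2 - p.2).
Proof.
move=> neq_pp' /imsetP [t1 _ ep] /imsetP [t2 _ ep']; subst p p'.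
have dt_neq0 : t2 - t1 != 0.
  by rewrite subr_eq0; apply: contra neq_pp' => /eqP ->.
apply/setP => z; apply/imsetP/imsetP => [[t _ ->]|[u _ ->]] /=.
  exists ((t - t1) / (t2 - t1)) => //.
  by congr pair; field.
by exists (t1 + u * (t2 - t1)) => //; congr pair; ring.
Qed.

Lemma card_setI_line_le1 (a b a' b' : F * F) : line a b != line a' b' ->
  (#|line a b :&: line a' b'| <= 1)%N.
Proof.
move=> neq_lines; apply/card_le1_eqP => p p' /setIP [p_l p_l'] /setIP [p'_l p'_l'].
apply/eqP; apply: contraR neq_lines => neq_pp'.
by rewrite (line_through2 neq_pp' p'_l p_l) (line_through2 neq_pp' p'_l' p_l').
Qed.

End Lines.

Lemma sum_mem_card (T : finType) (A C : {set T}) :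
  \sum_(b in C) (b \in A : nat) = #|A :&: C|.
Proof.
rewrite -big_mkcondr sum1_card; apply: eq_card => b.
by rewrite !inE andbC.
Qed.

Lemma sum_sqr_ge (T : finType) (A : {pred T}) (f : T -> nat) :
  (\sum_(i in A) f i) ^ 2 <= #|A| * \sum_(i in A) f i ^ 2.
Proof.
rewrite -(leq_pmul2l (isT : 0 < 2)).
have -> : 2 * (\sum_(i in A) f i) ^ 2 = \sum_(i in A) \sum_(j in A) 2 * (f i * f j).
  rewrite -mulnn big_distrl big_distrr /=; apply: eq_bigr => i _.
  by rewrite !big_distrr.
have -> : 2 * (#|A| * \sum_(i in A) f i ^ 2) =
    \sum_(i in A) \sum_(j in A) (f i ^ 2 + f j ^ 2).
  under [RHS]eq_bigr do rewrite big_split /= sum_nat_const.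
  by rewrite big_split /= -big_distrr /= sum_nat_const mul2n addnn.
by apply: leq_sum => i _; apply: leq_sum => j _; rewrite nat_Cauchy.
Qed.

Section Incidence.
Variables (T : finType) (B : {set T}) (L : T -> {set T}) (k : nat).
Hypothesis card_L : {in ~: B, forall x, #|L x :&: B| = k}.
Hypothesis card_LL : {in ~: B &, forall x y, x != y -> #|L x :&: L y :&: B| <= 1}.

Let mult b := \sum_(x in ~: B) (b \in L x : nat).

Lemma sum_mult : \sum_(b in B) mult b = #|~: B| * k.
Proof.
rewrite exchange_big /= -sum_nat_const; apply: eq_bigr => x xB.
by rewrite sum_mem_card card_L.
Qed.

Lemma sum_mult_sqr : \sum_(b in B) mult b ^ 2 <= #|~: B| * k + #|~: B| * #|~: B|.
Proof.
have -> : \sum_(b in B) mult b ^ 2 =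
    \sum_(x in ~: B) \sum_(y in ~: B) #|L x :&: L y :&: B|.
  under eq_bigr => b _ do rewrite -mulnn big_distrl /=.
  rewrite exchange_big /=; apply: eq_bigr => x _.
  under eq_bigr => b _ do rewrite big_distrr /=.
  rewrite exchange_big /=; apply: eq_bigr => y _.
  by rewrite -sum_mem_card; apply: eq_bigr => b _; rewrite in_setI mulnb.
rewrite -!sum_nat_const -big_split /=; apply: leq_sum => x xB.
rewrite (bigD1 x) //= setIid card_L // leq_add2l.
apply: leq_trans (_ : \sum_(y in ~: B | y != x) 1 <= _).
  by apply: leq_sum => y /andP [yB yx]; apply: card_LL; rewrite // eq_sym.
by rewrite sum1_card; apply/subset_leq_card/subsetP => y /andP [].
Qed.

Lemma incidence_bound : #|~: B| * k * k <= #|B| * (k + #|~: B|).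
Proof.
have := leq_trans (sum_sqr_ge B mult) (leq_mul (leqnn _) sum_mult_sqr).
rewrite sum_mult; have [->|s_gt0] := posnP #|~: B|; first by rewrite !mul0n.
by rewrite -(leq_pmul2l s_gt0); nia.
Qed.

End Incidence.

Lemma two_thirds_bound (n s q : nat) : 0 < q -> n + s = q * q ->
  s * q.-1 * q.-1 <= n * (q.-1 + s) -> 2 * (q * q) <= 3 * n + 6 * q.
Proof.
move=> q_gt0 nsq h; suff s_small : 3 * s <= q * q + 6 * q by lia.
have {h} : s * s <= q * s + q * q * q by case: q q_gt0 nsq h => // p _; nia.
rewrite leqNgt => ss; apply/negP => s_big.
(* s(s-q) is increasing in s, and (q^2+6q)(q^2+3q) already exceeds 9 q^3. *)
have : (q * q + 6 * q) * (q * q + 3 * q) < 3 * s * (3 * s - 3 * q).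
  apply: leq_ltn_trans (leq_mul (leqnn _) (_ : _ <= 3 * s - 3 * q)) _; first lia.
  by rewrite ltn_pmul2r; lia.
nia.
Qed.

Definition isolating_line (F : finFieldType) (B : {set F * F}) x L :=
  (exists a b, b != (0, 0)%R /\ L = line a b) /\ L :&: ~: B = [set x].

Lemma nikodym_lines (F : finFieldType) (B : {set F * F}) : nikodym B ->
  exists L, forall x, x \notin B -> isolating_line B x (L x).
Proof.
move=> nikB; apply: (fin_all_exists (P := fun x L => x \notin B -> isolating_line B x L)).
move=> x; have [xB|/nikB [a [b [b_neq0 eL]]]] := boolP (x \in B).
  by exists set0; move=> /negP.
by exists (line a b) => _; split; first by exists a, b.
Qed.

Lemma nikodym_card (F : finFieldType) (B : {set F * F}) : nikodym B ->
  2 * (#|F| * #|F|) <= 3 * #|B| + 6 * #|F|.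
Proof.
move=> /nikodym_lines [L L_spec].
have card_L : {in ~: B, forall x, #|L x :&: B| = #|F|.-1}.
  move=> x; rewrite inE => /L_spec [[a [b [b_neq0 eL]]] Lx_outB].
  have := cardsID B (L x); rewrite setDE Lx_outB cards1 eL card_line //; lia.
have card_LL : {in ~: B &, forall x y, x != y -> #|L x :&: L y :&: B| <= 1}.
  move=> x y; rewrite !inE => /L_spec [[a [b [_ eLx]]] Lx_outB].
  move=> /L_spec [[a' [b' [_ eLy]]] Ly_outB] neq_xy.
  apply: leq_trans (subset_leq_card (subsetIl _ _)) _; rewrite eLx eLy.
  apply: card_setI_line_le1; apply: contra neq_xy => /eqP eq_lines.
  by apply/eqP/set1_inj; rewrite -Lx_outB -Ly_outB eLx eLy eq_lines.
apply: two_thirds_bound (incidence_bound card_L card_LL).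
- by apply/card_gt0P; exists 0%R.
- by rewrite -card_prod cardsC.
Qed.

(* Imported last, since Reals rebinds [%R] and the [field] tactic. *)
From Stdlib Require Import Reals Lra.

Theorem mainTheorem2 :
  exists C : R, (0 < C)%R /\
    forall (F : finFieldType) (B : {set F * F}),
      nikodym B ->
      (INR #|B| >= 2 * INR #|F| ^ 2 / 3 - C * INR #|F|)%R.
Proof.
exists 2%R; split; first lra.
move=> F B /nikodym_card /leP /le_INR.
rewrite !mult_INR plus_INR !mult_INR.
move: (INR #|F|) (INR #|B|) => q n; rewrite /= Rmult_1_r; lra.
Qed.
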